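(* Let $\Phi=(G,\varphi)$ be a complex unit gain graph and let $v$ be a vertex lying on a cycle of $G$. (i) If $r(\Phi)=r(G)-2\theta(G)$, then $r(\Phi)=r(\Phi-v)$, $r(G-v)=r(G)-2$ and $\theta(G)=\theta(G-v)+1$. (ii) If $r(\Phi)=r(G)+2\theta(G)$, then $r(\Phi)=r(\Phi-v)+2$, $r(G-v)=r(G)$ and $\theta(G)=\theta(G-v)+1$. (iii) If $r(\Phi)=r(G)-2\theta(G)$ (respectively $r(\Phi)=r(G)+2\theta(G)$), then $r(\Phi-v)=r(G-v)-2\theta(G-v)$ (respectively $r(\Phi-v)=r(G-v)+2\theta(G-v)$), $v$ lies on exactly one cycle of $G$, and $v$ is not a quasi-pendant vertex of $G$.
   Context: A complex unit gain graph $\Phi=(G,\varphi)$ consists of a finite simple graph $G$ with vertex set $\{v_1,\dots,v_n\}$ and a gain function $\varphi$ assigning to each oriented edge $e_{ij}$ ($v_iv_j\in E(G)$) a complex number of modulus $1$ with $\varphi(e_{ji})=\overline{\varphi(e_{ij})}$. $A(\Phi)$ is the Hermitian matrix with $(i,j)$ entry $\varphi(e_{ij})$ if $v_iv_j\in E(G)$ and $0$ otherwise; $r(\Phi)$ is its rank; $r(\cdot)$ of a simple graph is the rank of its $0$-$1$ adjacency matrix. $\Phi-v$ is the induced gain subgraph obtained by deleting $v$ and its incident edges (with underlying graph $G-v$). $\theta(G)=|E(G)|-|V(G)|+\omega(G)$, $\omega(G)$ the number of components. A quasi-pendant vertex is a vertex adjacent to a vertex of degree $1$. *)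

From HB Require Import structures.
From mathcomp Require Import all_boot all_order all_algebra.
From mathcomp Require Import complex.
From mathcomp Require Import reals.
Set Implicit Arguments. Unset Strict Implicit. Unset Printing Implicit Defensive.
Import Order.TTheory GRing.Theory Num.Theory.
Local Open Scope ring_scope.

(* A simple graph on a finite vertex type V is a symmetric irreflexive rel V. *)

Section GainGraphs.
Variable R : realType.
Variable V : finType.

Definition gain_mx (adj : rel V) (phi : V -> V -> R[i]) : 'M[R[i]]_#|V| :=
  \matrix_(i, j) (if adj (enum_val i) (enum_val j)
                  then phi (enum_val i) (enum_val j) else 0).

Definition gain_rank (adj : rel V) (phi : V -> V -> R[i]) : nat :=
  \rank (gain_mx adj phi).
End GainGraphs.

Definition adj01_mx (V : finType) (adj : rel V) : 'M[rat]_#|V| :=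
  \matrix_(i, j) (adj (enum_val i) (enum_val j))%:R.

Definition graph_rank (V : finType) (adj : rel V) : nat := \rank (adj01_mx adj).

Definition edge_set (V : finType) (adj : rel V) : {set {set V}} :=
  [set e : {set V} | [exists x, exists y, adj x y && (e == [set x; y])]].

Definition ncomp (V : finType) (adj : rel V) : nat :=
  n_comp (connect adj) (mem (@predT V)).

Definition theta (V : finType) (adj : rel V) : int :=
  (#|edge_set adj|%:Z - #|V|%:Z + (ncomp adj)%:Z)%R.

Definition del_vertex (V : finType) (v : V) := {x : V | x != v}.
Definition del_adj (V : finType) (adj : rel V) (v : V) : rel (del_vertex v) :=
  fun x y => adj (val x) (val y).
Definition del_gain (V : finType) (T : Type) (phi : V -> V -> T) (v : V) :
  del_vertex v -> del_vertex v -> T :=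
  fun x y => phi (val x) (val y).

Definition is_cycle (V : finType) (adj : rel V) (s : seq V) : bool :=
  [&& uniq s, (3 <= size s)%N & cycle adj s].

Definition cycle_edges (V : finType) (s : seq V) : {set V * V} :=
  [set p : V * V | (p.1 \in s) && ((next s p.1 == p.2) || (prev s p.1 == p.2))].

Definition on_cycle (V : finType) (adj : rel V) (v : V) : Prop :=
  exists s : seq V, is_cycle adj s /\ v \in s.

(* v lies on exactly one cycle: all cycles through v have the same edge set
   (a cycle of a simple graph is determined by its edge set) *)
Definition on_unique_cycle (V : finType) (adj : rel V) (v : V) : Prop :=
  on_cycle adj v /\
  forall s1 s2 : seq V, is_cycle adj s1 -> v \in s1 -> is_cycle adj s2 -> v \in s2 ->
    cycle_edges s1 = cycle_edges s2.

Definition degree (V : finType) (adj : rel V) (x : V) : nat := #|[set y | adj x y]|.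

Definition quasi_pendant (V : finType) (adj : rel V) (v : V) : Prop :=
  exists u, adj v u /\ degree adj u = 1%N.

Arguments del_adj {V} adj v.
Arguments del_gain {V T} phi v.

(* Both A(Phi) and the 0-1 matrix A(G) have support exactly the edges of G, and
   for any two matrices M1, M2 with the same support (over arbitrary fields)
   r(M1) <= r(M2) + 2 theta(G).  This is proved by induction on |V|: the first
   vertex y of a maximal path is isolated (delete y), or a leaf (delete its
   neighbour, which lowers both ranks by exactly 2), or has two neighbours joined
   by a path avoiding y (delete y: theta drops by at least 1 and each rank by at
   most 2).  Now let r(M1) = r(M2) - 2 theta(G) and let v lie on a cycle.  The bound
   for G - v, with r(M1 - v) <= r(M1) and r(M2) <= r(M2 - v) + 2, forces equality
   everywhere, which gives (i), and (ii) after exchanging M1 and M2.  In particular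
   theta drops by exactly 1 at every cycle vertex.  Two cycles through v with
   different edge sets meet at a vertex whose cycle-neighbours differ, and deleting
   it lowers theta by 2; a leaf attached to v would give r(M1 - v) = r(M1) - 2. *)

From HB Require Import structures.
From mathcomp Require Import all_boot all_order all_algebra.
From mathcomp Require Import complex.
From mathcomp Require Import reals.
From mathcomp Require Import zify.
Set Implicit Arguments. Unset Strict Implicit. Unset Printing Implicit Defensive.
Import Order.TTheory GRing.Theory Num.Theory.
Local Open Scope ring_scope.

Section DeleteIndex.
Variables (K : fieldType) (m n : nat) (g : 'I_m -> 'I_n) (k : 'I_n).
Hypothesis g_onto : forall i, i != k -> exists j, g j = i.

Lemma rowsub_addsmx_eqmx p (A : 'M[K]_(n, p)) : (A == rowsub g A + row k A)%MS.
Proof.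
apply/andP; split; last by rewrite addsmx_sub rowsub_sub row_sub.
apply/row_subP => i; have [->|ik] := eqVneq i k; first exact: addsmxSr.
have [j <-] := g_onto ik; rewrite -row_rowsub.
exact: submx_trans (row_sub _ _) (addsmxSl _ _).
Qed.

Lemma mxrank_rowsub_leS p (A : 'M[K]_(n, p)) : (\rank A <= (\rank (rowsub g A)).+1)%N.
Proof.
rewrite (eqmx_rank (rowsub_addsmx_eqmx A)).
apply: leq_trans (mxrank_adds_leqif _ _) _.
by rewrite -[X in (_ <= X)%N]addn1 leq_add2l rank_leq_row.
Qed.

Lemma mxrank_rowsub_row0 p (A : 'M[K]_(n, p)) : row k A = 0 -> \rank (rowsub g A) = \rank A.
Proof. by move=> Ak0; rewrite (eqmx_rank (rowsub_addsmx_eqmx A)) Ak0 addsmx0. Qed.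

Lemma mxrank_rowsub_pivot p (A : 'M[K]_(n, p)) c :
  A k c != 0 -> (forall j, A (g j) c = 0) -> \rank A = (\rank (rowsub g A)).+1.
Proof.
move=> Akc Agc; apply/eqP; rewrite eqn_leq mxrank_rowsub_leS (eqmx_rank (rowsub_addsmx_eqmx A)).
have [le_rank eq_rank] := mxrank_leqif_sup (addsmxSl (rowsub g A) (row k A)).
rewrite ltn_neqAle le_rank andbT eq_rank addsmx_sub submx_refl /=.
apply/negP => /submxP[D /(congr1 (fun B : 'M_(1, p) => B 0 c))].
rewrite !mxE big1 => [Ak0|j _]; first by rewrite Ak0 eqxx in Akc.
by rewrite !mxE Agc mulr0.
Qed.

Lemma mxrank_colsub_tr p (A : 'M[K]_(p, n)) : \rank (colsub g A) = \rank (rowsub g A^T).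
Proof. by rewrite -mxrank_tr; congr (\rank _); apply/matrixP => i j; rewrite !mxE. Qed.

Lemma mxrank_colsub_le p (A : 'M[K]_(p, n)) : (\rank (colsub g A) <= \rank A)%N.
Proof. by rewrite mxrank_colsub_tr -[X in (_ <= X)%N]mxrank_tr mxrankS ?rowsub_sub. Qed.

Lemma mxrank_colsub_leS p (A : 'M[K]_(p, n)) : (\rank A <= (\rank (colsub g A)).+1)%N.
Proof. by rewrite mxrank_colsub_tr -mxrank_tr mxrank_rowsub_leS. Qed.

Lemma mxrank_colsub_col0 p (A : 'M[K]_(p, n)) : col k A = 0 -> \rank (colsub g A) = \rank A.
Proof.
move=> Ak0; rewrite mxrank_colsub_tr -[RHS]mxrank_tr mxrank_rowsub_row0 //.
by rewrite -tr_col Ak0 trmx0.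
Qed.

Lemma mxrank_colsub_pivot p (A : 'M[K]_(p, n)) r :
  A r k != 0 -> (forall j, A r (g j) = 0) -> \rank A = (\rank (colsub g A)).+1.
Proof.
move=> Ark Arg; rewrite mxrank_colsub_tr -mxrank_tr (mxrank_rowsub_pivot (c := r)) ?mxE //.
by move=> j; rewrite mxE.
Qed.
End DeleteIndex.

(* [gain_rank adj phi] and [graph_rank adj] are [rk] of the weight functions
   [if adj x y then phi x y else 0] and [(adj x y)%:R], by conversion. *)
Definition rk (K : fieldType) (V : finType) (M : V -> V -> K) : nat :=
  \rank (\matrix_(i, j) M (enum_val i) (enum_val j) : 'M[K]_#|V|).

Section DeleteVertexRank.
Variables (K : fieldType) (V : finType) (x : V).
Implicit Type M : V -> V -> K.

Let g (i : 'I_#|(del_vertex x : finType)|) : 'I_#|V| := enum_rank (val (enum_val i)).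

Let g_onto i : i != enum_rank x -> exists j, g j = i.
Proof.
move=> ix; have vx : enum_val i != x by apply: contra ix => /eqP <-; rewrite enum_valK.
by exists (enum_rank (Sub (enum_val i) vx : del_vertex x)); rewrite /g enum_rankK enum_valK.
Qed.

Let mx_del_gain M : \matrix_(i, j) del_gain M x (enum_val i) (enum_val j) =
  rowsub g (colsub g (\matrix_(i, j) M (enum_val i) (enum_val j))).
Proof. by apply/matrixP => i j; rewrite !mxE /g !enum_rankK. Qed.

Lemma rk_del_le M : (rk (del_gain M x) <= rk M)%N.
Proof.
rewrite /rk mx_del_gain.
exact: leq_trans (mxrankS (rowsub_sub _ _)) (mxrank_colsub_le _ _).
Qed.

Lemma rk_del_leD2 M : (rk M <= (rk (del_gain M x)).+2)%N.
Proof.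
rewrite /rk mx_del_gain; apply: leq_trans (mxrank_colsub_leS g_onto _) _.
by rewrite ltnS (mxrank_rowsub_leS g_onto).
Qed.

Lemma rk_del_isolated M :
  (forall y, M x y = 0) -> (forall y, M y x = 0) -> rk (del_gain M x) = rk M.
Proof.
move=> Mx0 M0x.
rewrite /rk mx_del_gain (mxrank_rowsub_row0 g_onto) ?(mxrank_colsub_col0 g_onto) //.
  by apply/colP => i; rewrite !mxE enum_rankK M0x.
by apply/rowP => j; rewrite !mxE enum_rankK Mx0.
Qed.

Lemma rk_del_pendant_nbr M u : u != x ->
  (forall y, (M u y != 0) = (y == x)) -> (forall y, (M y u != 0) = (y == x)) ->
  rk M = (rk (del_gain M x)).+2.
Proof.
move=> ux Mu Mu'.
have Mu0 (y : del_vertex x) : M u (val y) = 0.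
  by apply/eqP; rewrite -[_ == 0]negbK Mu (valP y).
have M0u (y : del_vertex x) : M (val y) u = 0.
  by apply/eqP; rewrite -[_ == 0]negbK Mu' (valP y).
rewrite /rk mx_del_gain (mxrank_colsub_pivot g_onto (r := enum_rank u)); last 2 first.
- by rewrite mxE !enum_rankK Mu.
- by move=> j; rewrite mxE !enum_rankK Mu0.
rewrite (mxrank_rowsub_pivot g_onto (c := enum_rank (Sub u ux : del_vertex x))) //.
- by rewrite !mxE /g !enum_rankK Mu'.
- by move=> j; rewrite !mxE /g !enum_rankK M0u.
Qed.
End DeleteVertexRank.

Lemma card_imset_factor (T U W : finType) (f : T -> U) (h : T -> W) (B : {set T}) :
  {in B &, forall a b, h a = h b -> f a = f b} -> (#|f @: B| <= #|h @: B|)%N.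
Proof.
move=> fh; pose P := [set (f y, h y) | y in B].
have -> : f @: B = fst @: P by rewrite -imset_comp.
have -> : h @: B = snd @: P by rewrite -imset_comp.
rewrite (card_in_imset (f := snd)); first exact: leq_imset_card.
move=> _ _ /imsetP[a aB ->] /imsetP[b bB ->] /= hab.
by rewrite hab (fh a b aB bB hab).
Qed.

Lemma card_imset_defect (T U : finType) (f : T -> U) (S N : {set T}) :
  S \subset N -> (#|S| + #|f @: N| <= #|N| + #|f @: S|)%N.
Proof.
move=> sSN; have eNS : N :&: S = S by exact/setIidPr.
have -> : f @: N = f @: S :|: f @: (N :\: S) by rewrite -imsetU -{1}(setID N S) eNS.
have := (leq_card_setU (f @: S) (f @: (N :\: S))).1.
have := leq_imset_card f (N :\: S); rewrite cardsD eNS.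
have := subset_leq_card sSN; lia.
Qed.

Lemma connect_connect (T : finType) (e : rel T) : connect (connect e) =2 connect e.
Proof.
by move=> y z; apply/idP/idP; [apply: connect_sub => a b; apply | apply: connect1].
Qed.

(* [ncomp e] applies [n_comp] to [connect e], not to [e]. *)
Lemma ncomp_roots (T : finType) (e : rel T) : connect_sym e ->
  ncomp e = #|[set fingraph.root e y | y : T]|.
Proof.
move=> sym_e; rewrite /ncomp (eq_n_comp (@connect_connect T e)).
apply: eq_card => y; rewrite !inE andbT.
apply/eqP/imsetP => [<-|[z _ ->]]; first by exists y.
exact/eqP/(roots_root sym_e).
Qed.

Definition nbrs_del (V : finType) (adj : rel V) (x : V) : {set del_vertex x} :=
  [set y | adj x (val y)].

Definition cycle_at (V : finType) (adj : rel V) (x : V) (a b : del_vertex x) : bool :=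
  [&& a != b, adj x (val a), adj x (val b) & connect (del_adj adj x) a b].
Arguments cycle_at {V} adj x a b.

Section DeleteVertexGraph.
Variables (V : finType) (adj : rel V) (x : V).
Hypotheses (adj_sym : symmetric adj) (adj_irr : irreflexive adj).

Local Notation root' := (fingraph.root (del_adj adj x)).

Lemma del_adj_sym : symmetric (del_adj adj x).
Proof. by move=> a b; apply: adj_sym. Qed.

Lemma del_adj_irr : irreflexive (del_adj adj x).
Proof. by move=> a; apply: adj_irr. Qed.

Lemma adj_neq y : adj x y -> y != x.
Proof. by apply: contraTneq => ->; rewrite adj_irr. Qed.

Lemma card_nbrs_del : #|nbrs_del adj x| = degree adj x.
Proof.
rewrite /degree -(card_imset _ val_inj); apply: eq_card => y; rewrite inE.
apply/imsetP/idP => [[z]|xy]; first by rewrite inE => ? ->.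
by exists (Sub y (adj_neq xy)); rewrite ?inE.
Qed.

Lemma card_edge_set_del :
  #|edge_set adj| = (#|edge_set (del_adj adj x)| + degree adj x)%N.
Proof.
rewrite -(cardsID [set e : {set V} | x \in e]) addnC; congr (_ + _)%N.
  rewrite -(card_imset _ (imset_inj val_inj)); apply: eq_card => e; rewrite /edge_set !inE.
  apply/andP/imsetP => [[]|[e' /[!inE] /existsP[a /existsP[b /andP[ab /eqP->]]] ->]].
    move=> xe /existsP[a /existsP[b /andP[ab /eqP de]]].
    move: xe; rewrite de !inE negb_or ![x == _]eq_sym => /andP[ax bx].
    exists [set (Sub a ax : del_vertex x); Sub b bx].
      rewrite inE; apply/existsP; exists (Sub a ax).
      by apply/existsP; exists (Sub b bx); rewrite /del_adj /= ab eqxx.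
    by rewrite imsetU1 imset_set1.
  split; first by apply/imsetP => -[y _ yx]; move: (valP y); rewrite -yx eqxx.
  apply/existsP; exists (val a); apply/existsP; exists (val b).
  by rewrite imsetU1 imset_set1 [adj _ _]ab eqxx.
rewrite /degree -(@card_in_imset _ _ (fun y => [set x; y])); last first.
  move=> a b /[!inE] xa _ /setP/(_ a).
  by rewrite !inE eqxx orbT (negbTE (adj_neq xa)) => /esym/eqP.
apply: eq_card => e; rewrite /edge_set !inE.
apply/andP/imsetP => [[/existsP[a /existsP[b /andP[ab /eqP->]]]]|[y /[!inE] xy ->]].
  rewrite !inE => /orP[] /eqP->; first by exists b; rewrite ?inE.
  by exists a; rewrite 1?setUC // inE adj_sym.
split; last by rewrite !inE eqxx.
by apply/existsP; exists x; apply/existsP; exists y; rewrite xy eqxx.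
Qed.

Lemma connect_del_lift (y : del_vertex x) z :
  ~~ [exists n in nbrs_del adj x, connect (del_adj adj x) y n] ->
  connect adj (val y) z -> exists2 z' : del_vertex x, val z' = z & connect (del_adj adj x) y z'.
Proof.
move=> ny /connectP[p]; elim: p y ny => [|a p IH] y ny /=; first by move=> _ ->; exists y.
move=> /andP[ya pa] za; have ax : a != x.
  apply: contraNneq ny => ax; rewrite ax in ya.
  by apply/exists_inP; exists y; rewrite ?connect0 // inE adj_sym.
have ya' : del_adj adj x y (Sub a ax) := ya.
have [|z' zz' az'] := IH (Sub a ax) _ pa za.
  apply: contra ny => /exists_inP[n nn an]; apply/exists_inP; exists n => //.
  exact: connect_trans (connect1 ya') an.
by exists z' => //; apply: connect_trans (connect1 ya') az'.
Qed.

Lemma ncomp_del : ((ncomp (del_adj adj x)).+1 <=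
  ncomp adj + #|root' @: nbrs_del adj x|)%N.
Proof.
set N := nbrs_del adj x; set r := fingraph.root adj.
have sym' : connect_sym (del_adj adj x) := sym_connect_sym del_adj_sym.
have sym : connect_sym adj := sym_connect_sym adj_sym.
pose A := [set y | [exists n in N, connect (del_adj adj x) y n]].
have rA : root' @: A \subset root' @: N.
  apply/subsetP => _ /imsetP[y /[!inE] /exists_inP[n nN yn] ->].
  by apply/imsetP; exists n => //; apply/fingraph.rootP.
have rnA : (#|root' @: (~: A)| <= #|(r \o val) @: (~: A)|)%N.
  apply: card_imset_factor => a b /[!inE] na nb /= /(fingraph.rootP sym)/(connect_del_lift na).
  by case=> z' /val_inj <-; apply/fingraph.rootP.
have rnAx : (r \o val) @: (~: A) \subset [set r y | y : V] :\ r x.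
  apply/subsetP => _ /imsetP[y /[!inE] ny ->]; rewrite /= imset_f // andbT.
  apply/eqP => /(fingraph.rootP sym)/(connect_del_lift ny)[z' zx _].
  by move: (valP z'); rewrite zx eqxx.
rewrite !ncomp_roots // -/r.
have -> : [set root' y | y : del_vertex x] = root' @: A :|: root' @: (~: A).
  by apply/setP => c; rewrite -imsetU setUCr; apply/imsetP/imsetP => -[y _ ->]; exists y.
have := cardsD1 (r x) [set r y | y : V]; rewrite imset_f // add1n.
have := (leq_card_setU (root' @: A) (root' @: (~: A))).1.
have := subset_leq_card rA; have := subset_leq_card rnAx; lia.
Qed.

(* Deleting x removes deg x edges and one vertex, and every component of G - x
   meeting N(x) is reattached to x; so each vertex of S beyond the first in its
   component of G - x accounts for one unit of theta. *)
Lemma theta_del (S : {set del_vertex x}) : S \subset nbrs_del adj x ->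
  theta (del_adj adj x) + #|S|%:Z <= theta adj + #|root' @: S|%:Z.
Proof.
move=> sSN.
have comps : ((ncomp (del_adj adj x)).+1 + #|S| <= degree adj x + ncomp adj + #|root' @: S|)%N.
  have := ncomp_del; have := card_imset_defect root' sSN; rewrite card_nbrs_del.
  by set rN := #|root' @: nbrs_del adj x|; set s := #|S|; set rS := #|root' @: S|; lia.
have : (0 < #|V|)%N by apply/card_gt0P; exists x.
rewrite /theta card_edge_set_del card_sig -/(predC1 x) cardC1 -subn1; lia.
Qed.

Lemma theta_del_le : theta (del_adj adj x) <= theta adj.
Proof. by have := theta_del (sub0set _); rewrite imset0 !cards0 !addr0. Qed.

Lemma theta_del_cycle (a b : del_vertex x) :
  cycle_at adj x a b -> theta (del_adj adj x) + 1 <= theta adj.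
Proof.
case/and4P=> ab xa xb cab; have sym' := sym_connect_sym del_adj_sym.
have := @theta_del [set a; b]; rewrite cards2 ab imsetU1 imset_set1.
rewrite (fingraph.rootP sym' cab) setUid cards1 -addn1 PoszD addrA lerD2r; apply.
by apply/subsetP => z /set2P[]->; rewrite inE.
Qed.

Lemma theta_del_two_cycles (a1 b1 a2 b2 : del_vertex x) :
  cycle_at adj x a1 b1 -> cycle_at adj x a2 b2 -> [set a1; b1] != [set a2; b2] ->
  theta (del_adj adj x) + 2 <= theta adj.
Proof.
case/and4P=> ab1 xa1 xb1 cab1 /and4P[ab2 xa2 xb2 cab2].
set P1 := [set a1; b1]; set P2 := [set a2; b2] => P12.
have sym' := sym_connect_sym del_adj_sym.
have rP1 z : z \in P1 -> root' z = root' a1.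
  by rewrite !inE => /orP[]/eqP->; rewrite // (fingraph.rootP sym' cab1).
have rP2 z : z \in P2 -> root' z = root' a2.
  by rewrite !inE => /orP[]/eqP->; rewrite // (fingraph.rootP sym' cab2).
have rP12 : root' @: (P1 :|: P2) = [set root' a1; root' a2].
  apply/setP => c; rewrite !inE; apply/imsetP/orP => [[z /setUP[/rP1|/rP2] <- ->]|].
  - by left.
  - by right.
  by case=> /eqP->; [exists a1 | exists a2]; rewrite ?inE ?eqxx ?orbT.
have cP1 : #|P1| = 2%N by rewrite cards2 ab1.
have cP2 : #|P2| = 2%N by rewrite cards2 ab2.
have cardU : ((root' a1 != root' a2).+3 <= #|P1 :|: P2|)%N.
  have := cardsUI P1 P2; rewrite cP1 cP2.
  have [r12|r12] /= := eqVneq (root' a1) (root' a2).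
    have : (#|P1 :&: P2| <= 1)%N.
      rewrite leqNgt; apply: contra P12 => I2; apply/eqP.
      have eI1 : P1 :&: P2 = P1 by apply/eqP; rewrite eqEcard subsetIl cP1.
      have eI2 : P1 :&: P2 = P2 by apply/eqP; rewrite eqEcard subsetIr cP2.
      by rewrite -[LHS]eI1 eI2.
    move: #|_ :&: _| #|_ :|: _| => i u; lia.
  have -> : P1 :&: P2 = set0.
    by apply/setP => z; rewrite in_setI in_set0; apply: contraNF r12 => /andP[/rP1 <- /rP2 <-].
  by rewrite cards0; move: #|_ :|: _| => u; lia.
have := @theta_del (P1 :|: P2); rewrite rP12 cards2.
have -> : P1 :|: P2 \subset nbrs_del adj x.
  by apply/subsetP => z; rewrite !inE => /orP[]/orP[]/eqP->.
move: cardU; case: (root' a1 != root' a2) => /=;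
  by move: #|_ :|: _| (theta _) (theta adj) => u t' t; lia.
Qed.
End DeleteVertexGraph.

Section Cycles.
Variables (V : finType) (adj : rel V).
Hypotheses (adj_sym : symmetric adj) (adj_irr : irreflexive adj).

Lemma path_del_connect x (a : del_vertex x) p : path adj (val a) p -> x \notin p ->
  forall z : del_vertex x, val z \in val a :: p -> connect (del_adj adj x) a z.
Proof.
elim: p a => [|c p IH] a /=; first by move=> _ _ z /[!inE] /eqP/val_inj->.
move=> /andP[ac pc] /[!inE] /norP[xc xp] z /predU1P[/val_inj->//|zp].
have cx : c != x by rewrite eq_sym.
have ac' : del_adj adj x a (Sub c cx) := ac.
exact: connect_trans (connect1 ac') (IH (Sub c cx) pc xp z zp).
Qed.

Lemma cycle_at_cycle s x : is_cycle adj s -> x \in s ->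
  exists a b : del_vertex x, [/\ val a = next s x, val b = prev s x & cycle_at adj x a b].
Proof.
case/and3P=> us ss cs /rot_to[i q rq]; rewrite -(next_rot i us) -(prev_rot i us) rq.
move: us ss cs; rewrite -(rot_uniq i) -(size_rot i) -(rot_cycle i) rq.
case/lastP: q {rq} => [//|q y]; case: q => [//|c q] uq _ cq.
have -> : next (x :: rcons (c :: q) y) x = c by rewrite /= eqxx.
have -> : prev (x :: rcons (c :: q) y) x = y.
  move: uq => /andP[xnq _]; rewrite prev_nth mem_head (memNindex xnq) /=.
  by rewrite size_rcons /= nth_rcons ltnn eqxx.
move: uq => /= /and3P[]; rewrite !(inE, mem_rcons) => /norP[xc /norP[xy xq]] /norP[cy _] _.
move: cq => /=; rewrite rcons_path last_rcons [adj y x]adj_sym => /and3P[xc' pcq yx].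
have cx : c != x by rewrite eq_sym.
have yx' : y != x by rewrite eq_sym.
exists (Sub c cx), (Sub y yx'); split => //; apply/and4P; split => //=.
apply: (path_del_connect (a := Sub c cx) (p := rcons q y)) => //=.
  by rewrite mem_rcons inE negb_or xy.
by rewrite inE mem_rcons mem_head orbT.
Qed.

Lemma exists_maximal_path (x0 : V) :
  exists y q, [/\ uniq (y :: q), path adj y q & forall z, adj y z -> z \in q].
Proof.
suff ext n (y : V) (q : seq V) : (#|V| - size q < n)%N -> uniq (y :: q) -> path adj y q ->
    exists y' q', [/\ uniq (y' :: q'), path adj y' q' & forall z, adj y' z -> z \in q'].
  by apply: (ext _.+1 x0 [::]); rewrite ?subn0.
elim: n y q => // n IH y q lt_n uq pq.
have [z /andP[yz zn]|max_y] := pickP (fun z => adj y z && (z \notin y :: q)).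
  have uzq : uniq (z :: y :: q) by rewrite /= zn.
  apply: (IH z (y :: q)) => //=; last by rewrite adj_sym yz.
  have := max_card (mem (z :: y :: q)); rewrite (card_uniqP uzq) /= => size_lt.
  by rewrite subnS prednK ?subn_gt0 ?(ltnW size_lt).
exists y, q; split => // z yz; move: (max_y z); rewrite yz => /negbFE.
by rewrite inE => /predU1P[zy|//]; rewrite zy adj_irr in yz.
Qed.

Lemma exists_leaf_or_cycle_at (x0 : V) :
  exists x, (degree adj x <= 1)%N \/ exists a b, cycle_at adj x a b.
Proof.
have [y [q [uq pq max_y]]] := exists_maximal_path x0.
exists y; rewrite leqNgt; case: (boolP (1 < degree adj y))%N => [/card_gt1P|]; last by left.
move=> [a [b [/[!inE] ya yb ab]]]; right.
case: q uq pq max_y => [|c q] /=; first by move=> _ _ /(_ a ya).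
rewrite inE negb_or => /andP[/andP[yc yq] _] /andP[yc' pcq] max_y.
have cy : c != y by rewrite eq_sym.
have conn z (zy : z != y) : adj y z -> connect (del_adj adj y) (Sub c cy) (Sub z zy).
  by move/max_y => zq; apply: (path_del_connect (p := q)).
exists (Sub a (adj_neq adj_irr ya)), (Sub b (adj_neq adj_irr yb)); apply/and4P; split => //.
have sym' := sym_connect_sym (del_adj_sym (x := y) adj_sym).
by apply: connect_trans (conn _ _ yb); rewrite sym' conn.
Qed.
End Cycles.

Lemma eq_cycle_edges (T : finType) (s1 s2 : seq T) v : uniq s1 -> uniq s2 ->
  v \in s1 -> v \in s2 ->
  {in s1, forall x, x \in s2 -> [set next s1 x; prev s1 x] = [set next s2 x; prev s2 x]} ->
  cycle_edges s1 = cycle_edges s2.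
Proof.
(* Following [next] along s1 from v never leaves s2, since at a common vertex the
   successor in s1 is one of the two neighbours in s2. *)
have sub t1 t2 : uniq t1 -> v \in t1 -> v \in t2 ->
    {in t1, forall x, x \in t2 -> [set next t1 x; prev t1 x] = [set next t2 x; prev t2 x]} ->
    {subset t1 <= t2}.
  move=> u1 v1 v2 nbrs y; rewrite -(fconnect_cycle (cycle_next u1) v1) => /iter_findex <-.
  elim: (findex _ v y) => [//|k IH] /=; set z := iter k _ v in IH *.
  have z1 : z \in t1 by rewrite /z; elim: k {IH z} => //= k IHk; rewrite mem_next.
  have : next t1 z \in [set next t2 z; prev t2 z] by rewrite -nbrs // !inE eqxx.
  by case/set2P=> ->; rewrite ?mem_next ?mem_prev.
move=> u1 u2 v1 v2 nbrs; have s12 := sub _ _ u1 v1 v2 nbrs.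
have s21 := sub _ _ u2 v2 v1 (fun x x2 x1 => esym (nbrs x x1 x2)).
apply/setP => -[a b]; rewrite !inE /=.
have [a1|a1] := boolP (a \in s1); last by rewrite (contraNF (s21 a)).
move: (nbrs a a1 (s12 a a1)) => /setP/(_ b); rewrite s12 // !inE.
by rewrite ![b == _]eq_sym.
Qed.

Definition has_support (K : nmodType) (V : finType) (M : V -> V -> K) (adj : rel V) : Prop :=
  forall x y, (M x y != 0) = adj x y.

Section Support.
Variables (K : fieldType) (V : finType) (adj : rel V) (M : V -> V -> K).
Hypotheses (adj_sym : symmetric adj) (adj_irr : irreflexive adj) (M_supp : has_support M adj).

Lemma has_support_del x : has_support (del_gain M x) (del_adj adj x).
Proof. by move=> a b; apply: M_supp. Qed.

Lemma rk_del_deg0 x : degree adj x = 0%N -> rk (del_gain M x) = rk M.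
Proof.
move/eqP; rewrite cards_eq0 => /eqP nbrs0.
have x_isolated y : adj x y = false by have := in_set0 y; rewrite -nbrs0 inE.
apply: rk_del_isolated => y; apply/eqP.
  by rewrite -[_ == 0]negbK M_supp x_isolated.
by rewrite -[_ == 0]negbK M_supp adj_sym x_isolated.
Qed.

Lemma rk_del_deg1_nbr u w : adj u w -> degree adj u = 1%N -> rk M = (rk (del_gain M w)).+2.
Proof.
move=> uw /eqP/cards1P[w' nbrs_u].
have w'w : w = w' by apply/set1P; rewrite -nbrs_u inE.
have nbr_u y : adj u y = (y == w) by rewrite w'w -in_set1 -nbrs_u inE.
apply: rk_del_pendant_nbr => [|y|y]; rewrite ?M_supp ?[adj y u]adj_sym ?nbr_u //.
by apply: contraTneq uw => ->; rewrite adj_irr.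
Qed.
End Support.

Theorem rk_le_add_theta (K1 K2 : fieldType) (V : finType) (adj : rel V)
    (M1 : V -> V -> K1) (M2 : V -> V -> K2) :
  symmetric adj -> irreflexive adj -> has_support M1 adj -> has_support M2 adj ->
  (rk M1)%:Z <= (rk M2)%:Z + 2 * theta adj.
Proof.
move Vn : #|V| => n; elim: n => [|n IH] in V adj M1 M2 Vn *.
  move=> _ _ _ _; have : (rk M1 <= #|V|)%N := rank_leq_row _.
  rewrite /theta Vn; lia.
move=> adj_sym adj_irr M1_supp M2_supp.
have [x0 _] : exists x0 : V, x0 \in V by apply/card_gt0P; rewrite Vn.
have IHdel x : (rk (del_gain M1 x))%:Z <= (rk (del_gain M2 x))%:Z + 2 * theta (del_adj adj x).
  apply: IH; rewrite ?card_sig -?/(predC1 x) ?cardC1 ?Vn //;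
    by [apply: del_adj_sym | apply: del_adj_irr | apply: has_support_del].
have [x [deg_x|[a [b cyc_x]]]] := exists_leaf_or_cycle_at adj_sym adj_irr x0; last first.
  have := theta_del_cycle adj_sym adj_irr cyc_x.
  have := rk_del_leD2 x M1; have := rk_del_le x M2; have := IHdel x; lia.
move: deg_x; rewrite leq_eqVlt ltnS leqn0 => /orP[deg1|/eqP deg0].
  have [w nbrs_x] := cards1P deg1.
  have xw : adj x w by have := set11 w; rewrite -nbrs_x inE.
  rewrite (rk_del_deg1_nbr adj_sym adj_irr M1_supp xw (eqP deg1)).
  rewrite (rk_del_deg1_nbr adj_sym adj_irr M2_supp xw (eqP deg1)).
  have := theta_del_le w adj_sym adj_irr; have := IHdel w; lia.
rewrite -(rk_del_deg0 adj_sym M1_supp deg0) -(rk_del_deg0 adj_sym M2_supp deg0).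
have := theta_del_le x adj_sym adj_irr; have := IHdel x; lia.
Qed.

Lemma theta_del_on_cycle (V : finType) (adj : rel V) x :
  symmetric adj -> irreflexive adj -> on_cycle adj x -> theta (del_adj adj x) + 1 <= theta adj.
Proof.
move=> adj_sym adj_irr [s [cyc_s xs]].
by have [a [b [_ _ cyc_x]]] := cycle_at_cycle adj_sym cyc_s xs; apply: theta_del_cycle cyc_x.
Qed.

Section Extremal.
Variables (K1 K2 : fieldType) (V : finType) (adj : rel V).
Variables (M1 : V -> V -> K1) (M2 : V -> V -> K2).
Hypotheses (adj_sym : symmetric adj) (adj_irr : irreflexive adj).
Hypotheses (M1_supp : has_support M1 adj) (M2_supp : has_support M2 adj).
Hypothesis extremal : (rk M1)%:Z = (rk M2)%:Z - 2 * theta adj.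

Lemma extremal_del x : on_cycle adj x ->
  [/\ rk (del_gain M1 x) = rk M1, (rk (del_gain M2 x))%:Z = (rk M2)%:Z - 2,
      theta adj = theta (del_adj adj x) + 1
    & (rk (del_gain M1 x))%:Z = (rk (del_gain M2 x))%:Z - 2 * theta (del_adj adj x)].
Proof.
move=> x_cyc; have theta_x := theta_del_on_cycle adj_sym adj_irr x_cyc.
have rk_del_x := rk_le_add_theta (del_adj_sym adj_sym) (del_adj_irr adj_irr)
  (has_support_del (x := x) M2_supp) (has_support_del (x := x) M1_supp).
have rk1_x := rk_del_le x M1; have rk2_x := rk_del_leD2 x M2.
(* rk M2 - 2 theta = rk M1 >= rk M1' >= rk M2' - 2 theta' >= rk M2 - 2 - 2 theta'
   >= rk M2 - 2 theta, so every step is an equality. *)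
by split; lia.
Qed.

Lemma extremal_not_quasi_pendant v : on_cycle adj v -> ~ quasi_pendant adj v.
Proof.
move=> v_cyc [u [vu deg_u]]; have [rk_del _ _ _] := extremal_del v_cyc.
have uv : adj u v by rewrite adj_sym.
by move: rk_del; rewrite (rk_del_deg1_nbr adj_sym adj_irr M1_supp uv deg_u); lia.
Qed.

Lemma extremal_on_unique_cycle v : on_cycle adj v -> on_unique_cycle adj v.
Proof.
move=> v_cyc; split => // s1 s2 cyc1 v1 cyc2 v2.
have [u1 u2] : uniq s1 /\ uniq s2 by case/and3P: cyc1; case/and3P: cyc2.
apply: (eq_cycle_edges u1 u2 v1 v2) => x x1 x2.
have [a1 [b1 [ea1 eb1 cyc1_x]]] := cycle_at_cycle adj_sym cyc1 x1.
have [a2 [b2 [ea2 eb2 cyc2_x]]] := cycle_at_cycle adj_sym cyc2 x2.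
have [_ _ theta_x _] := extremal_del (ex_intro _ s1 (conj cyc1 x1)).
have P12 : [set a1; b1] = [set a2; b2].
  apply/eqP/negPn/negP => /(theta_del_two_cycles adj_sym adj_irr cyc1_x cyc2_x).
  by rewrite theta_x lerD2l.
move/(congr1 (fun S : {set del_vertex x} => val @: S)): P12.
by rewrite !imsetU1 !imset_set1 ea1 eb1 ea2 eb2.
Qed.
End Extremal.

Theorem lemma4p1 (R : realType) (V : finType) (adj : rel V)
    (phi : V -> V -> R[i]) (v : V) :
  symmetric adj -> irreflexive adj ->
  (forall x y, adj x y -> `|phi x y| = 1) ->
  (forall x y, adj x y -> phi y x = conjc (phi x y)) ->
  on_cycle adj v ->
  [/\
   (* (i) *)
   ((gain_rank adj phi)%:Z = (graph_rank adj)%:Z - 2 * theta adj ->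
      [/\ gain_rank adj phi = gain_rank (del_adj adj v) (del_gain phi v),
          (graph_rank (del_adj adj v))%:Z = (graph_rank adj)%:Z - 2
        & theta adj = theta (del_adj adj v) + 1]),
   (* (ii) *)
   ((gain_rank adj phi)%:Z = (graph_rank adj)%:Z + 2 * theta adj ->
      [/\ gain_rank adj phi = (gain_rank (del_adj adj v) (del_gain phi v) + 2)%N,
          graph_rank (del_adj adj v) = graph_rank adj
        & theta adj = theta (del_adj adj v) + 1]),
   (* (iii), first case *)
   ((gain_rank adj phi)%:Z = (graph_rank adj)%:Z - 2 * theta adj ->
      [/\ (gain_rank (del_adj adj v) (del_gain phi v))%:Z =
            (graph_rank (del_adj adj v))%:Z - 2 * theta (del_adj adj v),
          on_unique_cycle adj v
        & ~ quasi_pendant adj v])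
 & (* (iii), second case *)
   ((gain_rank adj phi)%:Z = (graph_rank adj)%:Z + 2 * theta adj ->
      [/\ (gain_rank (del_adj adj v) (del_gain phi v))%:Z =
            (graph_rank (del_adj adj v))%:Z + 2 * theta (del_adj adj v),
          on_unique_cycle adj v
        & ~ quasi_pendant adj v])].
Proof.
move=> adj_sym adj_irr phi_unit _ v_cyc.
pose A := fun x y => if adj x y then phi x y else 0.
pose B := fun x y => (adj x y)%:R : rat.
have A_supp : has_support A adj.
  move=> x y; rewrite /A; case: ifP => [/phi_unit phi1|_]; last by rewrite eqxx.
  by rewrite -normr_eq0 phi1 oner_eq0.
have B_supp : has_support B adj by move=> x y; rewrite /B; case: (adj x y).
change (gain_rank adj phi) with (rk A); change (graph_rank adj) with (rk B).
change (gain_rank _ (del_gain phi v)) with (rk (del_gain A v)).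
change (graph_rank (del_adj adj v)) with (rk (del_gain B v)).
(* (ii) and the second case of (iii) are (i) and (iii) for the pair (B, A). *)
have swap : (rk A)%:Z = (rk B)%:Z + 2 * theta adj -> (rk B)%:Z = (rk A)%:Z - 2 * theta adj.
  by move=> ->; rewrite addrK.
split=> [ext|/swap ext|ext|/swap ext].
- by have [] := extremal_del adj_sym adj_irr A_supp B_supp ext v_cyc.
- have [rkB rkA -> _] := extremal_del adj_sym adj_irr B_supp A_supp ext v_cyc.
  by split=> //; apply/eqP; rewrite -eqz_nat PoszD rkA subrK.
- have [_ _ _ rk_del] := extremal_del adj_sym adj_irr A_supp B_supp ext v_cyc.
  split; first exact: rk_del.
    exact (extremal_on_unique_cycle adj_sym adj_irr A_supp B_supp ext v_cyc).
  exact (extremal_not_quasi_pendant adj_sym adj_irr A_supp B_supp ext v_cyc).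
- have [_ _ _ rk_del] := extremal_del adj_sym adj_irr B_supp A_supp ext v_cyc.
  split; first by rewrite rk_del subrK.
    exact (extremal_on_unique_cycle adj_sym adj_irr B_supp A_supp ext v_cyc).
  exact (extremal_not_quasi_pendant adj_sym adj_irr B_supp A_supp ext v_cyc).
Qed.
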